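(* There is a homomorphism of $\mathbb{S}$--algebras $\iota_1:bH_n(q)\to\mathcal{E}_n(q)$ satisfying $\iota_1(e_i)=e_i$ and $\iota_1(z_i)=e_ig_i$ for all $i\in[n-1]$.
   Context: $\mathbb{S}=\mathbb{C}[q,q^{-1}]$ with $q$ an indeterminate. The tied--boxed Hecke algebra $bH_n(q)$ is the $\mathbb{S}$--algebra presented by generators $e_1,\dots,e_{n-1}$, $z_1,\dots,z_{n-1}$ and relations: $e_i^2=e_i$, $e_ie_j=e_je_i$ (all $i,j$); $z_iz_jz_i=z_jz_iz_j$ if $|i-j|=1$, $z_iz_j=z_jz_i$ if $|i-j|>1$; $e_iz_i=z_i$; $e_iz_j=z_je_i$ (all $i,j$); $z_i^2=e_i+(q-q^{-1})z_i$. The algebra of braids and ties $\mathcal{E}_n(q)$ is the $\mathbb{S}$--algebra presented by generators $e_1,\dots,e_{n-1}$, $g_1,\dots,g_{n-1}$ and relations: $e_i^2=e_i$, $e_ie_j=e_je_i$; $g_ig_jg_i=g_jg_ig_j$ if $|i-j|=1$, $g_ig_j=g_jg_i$ if $|i-j|>1$; $g_ie_i=e_ig_i$; $g_ie_j=e_jg_i$ if $|i-j|>1$; $e_ig_jg_i=g_jg_ie_j$ and $e_ie_jg_j=e_ig_je_i=g_je_ie_j$ if $|i-j|=1$; $g_i^2=1+(q-q^{-1})e_ig_i$. *)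

(* Algebras given by generators and relations are modelled as
   the free associative unital S-algebra on the generators (formal terms)
   modulo the smallest S-algebra congruence containing the relations. *)
From HB Require Import structures.
From mathcomp Require Import all_boot all_algebra.
Set Implicit Arguments. Unset Strict Implicit. Unset Printing Implicit Defensive.
Import GRing.Theory.
Local Open Scope ring_scope.

(* Formal S-algebra terms over a generator type G. tScal a is a * 1. *)
Inductive term (S : comUnitRingType) (G : Type) : Type :=
| tGen of G
| tScal of S
| tAdd of term S G & term S G
| tMul of term S G & term S G.
Arguments tGen {S G}.
Arguments tScal {S G}.
Arguments tAdd {S G}.
Arguments tMul {S G}.

Inductive cong (S : comUnitRingType) (G : Type) (rel : term S G -> term S G -> Prop)
  : term S G -> term S G -> Prop :=
| c_rel x y : rel x y -> cong rel x y
| c_refl x : cong rel x x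
| c_sym x y : cong rel x y -> cong rel y x
| c_trans x y z : cong rel x y -> cong rel y z -> cong rel x z
| c_add x x' y y' : cong rel x x' -> cong rel y y' -> cong rel (tAdd x y) (tAdd x' y')
| c_mul x x' y y' : cong rel x x' -> cong rel y y' -> cong rel (tMul x y) (tMul x' y')
| c_addA x y z : cong rel (tAdd x (tAdd y z)) (tAdd (tAdd x y) z)
| c_addC x y : cong rel (tAdd x y) (tAdd y x)
| c_add0 x : cong rel (tAdd (tScal 0) x) x
| c_addN x : cong rel (tAdd x (tMul (tScal (-1)) x)) (tScal 0)
| c_mulA x y z : cong rel (tMul x (tMul y z)) (tMul (tMul x y) z)
| c_mul1l x : cong rel (tMul (tScal 1) x) x
| c_mul1r x : cong rel (tMul x (tScal 1)) x
| c_mulDl x y z : cong rel (tMul (tAdd x y) z) (tAdd (tMul x z) (tMul y z))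
| c_mulDr x y z : cong rel (tMul x (tAdd y z)) (tAdd (tMul x y) (tMul x z))
| c_scalD a b : cong rel (tScal (a + b)) (tAdd (tScal a) (tScal b))
| c_scalM a b : cong rel (tScal (a * b)) (tMul (tScal a) (tScal b))
| c_scalC a x : cong rel (tMul (tScal a) x) (tMul x (tScal a)).

(* A map on representatives inducing a homomorphism of (unital) S-algebras
   between the presented algebras. *)
Definition alg_hom (S : comUnitRingType) (G1 G2 : Type)
  (rel1 : term S G1 -> term S G1 -> Prop) (rel2 : term S G2 -> term S G2 -> Prop)
  (f : term S G1 -> term S G2) : Prop :=
  [/\ forall x y, cong rel1 x y -> cong rel2 (f x) (f y),
      forall x y, cong rel2 (f (tAdd x y)) (tAdd (f x) (f y)),
      forall x y, cong rel2 (f (tMul x y)) (tMul (f x) (f y)) &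
      forall a, cong rel2 (f (tScal a)) (tScal a)].

(* Indices i in [n-1] = {1,...,n-1} are represented 0-based by 'I_n.-1. *)
Definition adj (m : nat) (i j : 'I_m) : bool := (i.+1 == j :> nat) || (j.+1 == i :> nat).
Definition far (m : nat) (i j : 'I_m) : bool := (i.+1 < j)%N || (j.+1 < i)%N.

Inductive bH_gen (n : nat) : Type := bE of 'I_n.-1 | bZ of 'I_n.-1.
Inductive E_gen (n : nat) : Type := eE of 'I_n.-1 | eG of 'I_n.-1.

Section Rels.
Variables (S : comUnitRingType) (q : S) (n : nat).
Local Notation bT := (term S (bH_gen n)).
Local Notation eT := (term S (E_gen n)).
Local Notation "x ** y" := (tMul x y) (at level 40, left associativity).
Local Notation be i := (tGen (bE i)).
Local Notation bz i := (tGen (bZ i)).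
Local Notation ee i := (tGen (eE i)).
Local Notation eg i := (tGen (eG i)).

Inductive bH_rel : bT -> bT -> Prop :=
| bH_ee i : bH_rel (be i ** be i) (be i)
| bH_eecomm i j : bH_rel (be i ** be j) (be j ** be i)
| bH_braid i j : adj i j -> bH_rel (bz i ** bz j ** bz i) (bz j ** bz i ** bz j)
| bH_zcomm i j : far i j -> bH_rel (bz i ** bz j) (bz j ** bz i)
| bH_ez i : bH_rel (be i ** bz i) (bz i)
| bH_ezcomm i j : bH_rel (be i ** bz j) (bz j ** be i)
| bH_quad i : bH_rel (bz i ** bz i) (tAdd (be i) (tScal (q - q^-1) ** bz i)).

Inductive E_rel : eT -> eT -> Prop :=
| E_ee i : E_rel (ee i ** ee i) (ee i)
| E_eecomm i j : E_rel (ee i ** ee j) (ee j ** ee i)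
| E_braid i j : adj i j -> E_rel (eg i ** eg j ** eg i) (eg j ** eg i ** eg j)
| E_gcomm i j : far i j -> E_rel (eg i ** eg j) (eg j ** eg i)
| E_ge i : E_rel (eg i ** ee i) (ee i ** eg i)
| E_gefar i j : far i j -> E_rel (eg i ** ee j) (ee j ** eg i)
| E_egg i j : adj i j -> E_rel (ee i ** eg j ** eg i) (eg j ** eg i ** ee j)
| E_eeg1 i j : adj i j -> E_rel (ee i ** ee j ** eg j) (ee i ** eg j ** ee i)
| E_eeg2 i j : adj i j -> E_rel (ee i ** eg j ** ee i) (eg j ** ee i ** ee j)
| E_quad i : E_rel (eg i ** eg i) (tAdd (tScal 1) (tScal (q - q^-1) ** ee i ** eg i)).
End Rels.
Arguments bH_rel {S} q n.
Arguments E_rel {S} q n.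

(* Put z_i := e_i g_i.  The key fact is that every tie e_i commutes with every
   e_j g_j: for i = j by e_i^2 = e_i and g_i e_i = e_i g_i, for |i - j| > 1
   since e_i commutes with e_j and g_j, and for |i - j| = 1 by the mixed
   relations e_i e_j g_j = e_i g_j e_i = g_j e_i e_j.  Hence products of the z's
   collapse onto products of the g's: z_i z_j = e_j e_i g_i g_j and
   z_i z_j z_i = e_j e_i g_i g_j g_i.  The braid, commutation and quadratic
   relations of the z_i thus follow from those of the g_i, and e_i z_i = z_i
   from e_i^2 = e_i. *)
From HB Require Import structures.
From mathcomp Require Import all_boot all_algebra.
From Stdlib Require Import Setoid Morphisms.
From mathcomp Require Import zify.
Import GRing.Theory.
Local Open Scope ring_scope.

Instance cong_Equivalence S G rel : Equivalence (@cong S G rel).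
Proof. by split; [exact: c_refl | exact: c_sym | exact: c_trans]. Qed.

Local Hint Resolve c_refl : core.

Instance tAdd_Proper S G rel : Proper (cong rel ==> cong rel ==> cong rel) (@tAdd S G).
Proof. by move=> x x' hx y y' hy; apply: c_add. Qed.

Instance tMul_Proper S G rel : Proper (cong rel ==> cong rel ==> cong rel) (@tMul S G).
Proof. by move=> x x' hx y y' hy; apply: c_mul. Qed.

Fixpoint term_subst {S : comUnitRingType} {G1 G2 : Type}
    (f : G1 -> term S G2) (t : term S G1) : term S G2 :=
  match t with
  | tGen g => f g
  | tScal a => tScal a
  | tAdd x y => tAdd (term_subst f x) (term_subst f y)
  | tMul x y => tMul (term_subst f x) (term_subst f y)
  end.

Lemma term_subst_alg_hom (S : comUnitRingType) (G1 G2 : Type)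
    (rel1 : term S G1 -> term S G1 -> Prop) (rel2 : term S G2 -> term S G2 -> Prop)
    (f : G1 -> term S G2) :
  (forall x y, rel1 x y -> cong rel2 (term_subst f x) (term_subst f y)) ->
  alg_hom rel1 rel2 (term_subst f).
Proof.
move=> frel; split=> [x y|*|*|*]; last 3 [exact: c_refl].
elim=> {x y} /=; first exact: frel.
all: by econstructor; eassumption.
Qed.

Lemma eq_adj_or_far {m : nat} (i j : 'I_m) : [\/ i = j, adj i j | far i j].
Proof.
have [-> | neq_ij] := eqVneq i j; first exact: Or31.
have [adj_ij | nadj_ij] := boolP (adj i j); first exact: Or32.
by apply: Or33; move: neq_ij nadj_ij; rewrite /adj /far -val_eqE /=; lia.
Qed.

Section TiedGenerators.
Variables (S : comUnitRingType) (q : S) (n : nat).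
Local Notation eT := (term S (E_gen n)).
Implicit Types (i j : 'I_n.-1) (x y z : eT).
Local Notation R := (cong (E_rel q n)).
Local Notation "x ** y" := (tMul x y) (at level 40, left associativity).
Local Notation E i := (tGen (eE i)).
Local Notation G i := (tGen (eG i)).
Local Notation Z i := (E i ** G i).

Let mulA x y z : R (x ** (y ** z)) (x ** y ** z). Proof. exact: c_mulA. Qed.

Ltac by_assoc := (repeat setoid_rewrite mulA); reflexivity.

Let eeE i : R (E i ** E i) (E i). Proof. exact/c_rel/E_ee. Qed.
Let eeC i j : R (E i ** E j) (E j ** E i). Proof. exact/c_rel/E_eecomm. Qed.
Let geC i : R (G i ** E i) (E i ** G i). Proof. exact/c_rel/E_ge. Qed.

Lemma e_commute_eg i j : R (E i ** Z j) (Z j ** E i).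
Proof.
have [<- | adj_ij | far_ij] := eq_adj_or_far i j.
- setoid_rewrite mulA; setoid_rewrite eeE; setoid_rewrite <- mulA.
  by setoid_rewrite geC; setoid_rewrite mulA; setoid_rewrite eeE.
- setoid_rewrite mulA; setoid_rewrite (c_rel (E_eeg1 q adj_ij)).
  setoid_rewrite (c_rel (E_eeg2 q adj_ij)); setoid_rewrite <- mulA.
  by setoid_rewrite eeC; setoid_rewrite mulA; setoid_rewrite geC.
- have far_ji : far j i by rewrite /far orbC.
  setoid_rewrite mulA; setoid_rewrite eeC; setoid_rewrite <- mulA.
  by setoid_rewrite (c_rel (E_gefar q far_ji)); setoid_rewrite mulA.
Qed.

Lemma e_mul_eg i : R (E i ** Z i) (Z i).
Proof. by setoid_rewrite mulA; setoid_rewrite eeE. Qed.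

Lemma eg_mul_e i : R (Z i ** E i) (Z i).
Proof. by setoid_rewrite <- (e_commute_eg i i); apply: e_mul_eg. Qed.

Lemma eg_mul_eg i j : R (Z i ** Z j) (E j ** E i ** (G i ** G j)).
Proof.
transitivity (Z i ** E j ** G j : eT); first exact: mulA.
by setoid_rewrite <- (e_commute_eg j i); by_assoc.
Qed.

Lemma eg_mul_eg_eg i j : R (Z i ** Z j ** Z i) (E j ** E i ** (G i ** G j ** G i)).
Proof.
transitivity (Z i ** (Z j ** E i) ** G i : eT); first by_assoc.
setoid_rewrite <- (e_commute_eg i j).
transitivity (Z i ** E i ** Z j ** G i : eT); first by_assoc.
by setoid_rewrite (eg_mul_e i); setoid_rewrite (eg_mul_eg i j); by_assoc.
Qed.

Lemma eg_braid i j : adj i j -> R (Z i ** Z j ** Z i) (Z j ** Z i ** Z j).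
Proof.
move=> adj_ij; setoid_rewrite (eg_mul_eg_eg i j); setoid_rewrite (eg_mul_eg_eg j i).
by setoid_rewrite (c_rel (E_braid q adj_ij)); setoid_rewrite (eeC j i).
Qed.

Lemma eg_commute_far i j : far i j -> R (Z i ** Z j) (Z j ** Z i).
Proof.
move=> far_ij; setoid_rewrite (eg_mul_eg i j); setoid_rewrite (eg_mul_eg j i).
by setoid_rewrite (c_rel (E_gcomm q far_ij)); setoid_rewrite (eeC j i).
Qed.

Lemma eg_quad i : R (Z i ** Z i) (tAdd (E i) (tScal (q - q^-1) ** Z i)).
Proof.
setoid_rewrite (eg_mul_eg i i); setoid_rewrite (eeE i); setoid_rewrite (c_rel (E_quad q i)).
setoid_rewrite c_mulDr; apply: c_add; first exact: c_mul1r.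
transitivity (E i ** tScal (q - q^-1) ** E i ** G i : eT); first by_assoc.
setoid_rewrite <- (c_scalC _ (q - q^-1) (E i)).
transitivity (tScal (q - q^-1) ** (E i ** E i) ** G i : eT); first by_assoc.
by setoid_rewrite (eeE i); by_assoc.
Qed.

End TiedGenerators.

Definition iota1_gen (S : comUnitRingType) (n : nat) (g : bH_gen n) : term S (E_gen n) :=
  match g with
  | bE i => tGen (eE i)
  | bZ i => tMul (tGen (eE i)) (tGen (eG i))
  end.

Theorem proposition5p1 (S : comUnitRingType) (q : S) (hq : q \is a GRing.unit) (n : nat) :
  exists iota : term S (bH_gen n) -> term S (E_gen n),
    alg_hom (bH_rel q n) (E_rel q n) iota /\
    (forall i : 'I_n.-1,
        cong (E_rel q n) (iota (tGen (bE i))) (tGen (eE i)) /\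
        cong (E_rel q n) (iota (tGen (bZ i))) (tMul (tGen (eE i)) (tGen (eG i)))).
Proof.
exists (term_subst (@iota1_gen S n)); split; last by move=> i; split; apply: c_refl.
apply: term_subst_alg_hom => x y [] /=.
- by move=> i; apply/c_rel/E_ee.
- by move=> i j; apply/c_rel/E_eecomm.
- exact: eg_braid.
- exact: eg_commute_far.
- exact: e_mul_eg.
- exact: e_commute_eg.
- exact: eg_quad.
Qed.
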